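(* Let $(f,g)$ and $(f',g')$ be two models in the model class $\Theta$, with induced conditional distributions $p_{f,g}$, $p_{f',g'}$ and logit vectors $u(x)$, $u'(x)$. Then $$d_{\mathrm{logit}}^2(p_{f,g},p_{f',g'}) \;\ge\; 2\, d_{\mathrm{KL}}(p_{f,g},p_{f',g'}).$$ If moreover there is $0<\tau<1/3$ such that both $(f,g)$ and $(f',g')$ are $\tau$-lower bounded, then $$d_{\mathrm{logit}}^2(p_{f,g},p_{f',g'}) \;\le\; \frac{4\log(\tau)^2}{\tau}\, d_{\mathrm{KL}}(p_{f,g},p_{f',g'}).$$
   Context: Let $\mathcal X$ be an input space with data distribution $p_x$, and $\mathcal Y=\{y_1,\dots,y_k\}$ a finite label set. The model class $\Theta$ consists of pairs $(f,g)$ with $f:\mathcal X\to\mathbb R^m$ (embedding) and $g:\mathcal Y\to\mathbb R^m$ (unembedding), normalized so that $\sum_{y\in\mathcal Y} g(y)=0$. Each model induces $p_{f,g}(y\mid x)=\exp(f(x)^\top g(y))/\sum_{y'\in\mathcal Y}\exp(f(x)^\top g(y'))$. Its logit vector is $u(x)=(f(x)^\top g(y_1),\dots,f(x)^\top g(y_k))^\top\in\mathbb R^k$ (similarly $u'$ for $(f',g')$). The logit distance is $d_{\mathrm{logit}}^2(p_{f,g},p_{f',g'})=\mathbb E_{x\sim p_x}\|u(x)-u'(x)\|_2^2$, and $d_{\mathrm{KL}}(p_{f,g},p_{f',g'})=\mathbb E_{x\sim p_x}\big[\mathrm{KL}(p_{f,g}(\cdot\mid x)\,\|\,p_{f',g'}(\cdot\mid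 x))\big]$. A model is $\tau$-lower bounded ($\tau>0$) if for $p_x$-almost every $x$, $\min_{y\in\mathcal Y} p_{f,g}(y\mid x)\ge\tau$. *)

From HB Require Import structures.
From mathcomp Require Import all_boot all_order all_algebra.
From mathcomp Require Import all_classical all_reals all_analysis.
Set Implicit Arguments. Unset Strict Implicit. Unset Printing Implicit Defensive.
Import Order.TTheory GRing.Theory Num.Theory.
Local Open Scope ring_scope.

Section Defs.
Context {R : realType} {d : measure_display} {X : measurableType d} {Y : finType} {m : nat}.

Definition unembedding_normalized (g : Y -> 'rV[R]_m) : Prop :=
  \sum_(y : Y) g y = 0.

Definition logit (f : X -> 'rV[R]_m) (g : Y -> 'rV[R]_m) (x : X) (y : Y) : R :=
  \sum_(i < m) f x 0 i * g y 0 i.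

Definition pmodel (f : X -> 'rV[R]_m) (g : Y -> 'rV[R]_m) (x : X) (y : Y) : R :=
  expR (logit f g x y) / \sum_(y' : Y) expR (logit f g x y').

Definition d_logit2 (P : probability X R) (f f' : X -> 'rV[R]_m) (g g' : Y -> 'rV[R]_m)
  : \bar R :=
  (\int[P]_x (\sum_(y : Y) (logit f g x y - logit f' g' x y) ^+ 2)%:E)%E.

Definition KL_at (f f' : X -> 'rV[R]_m) (g g' : Y -> 'rV[R]_m) (x : X) : R :=
  \sum_(y : Y) pmodel f g x y * ln (pmodel f g x y / pmodel f' g' x y).

Definition d_KL (P : probability X R) (f f' : X -> 'rV[R]_m) (g g' : Y -> 'rV[R]_m)
  : \bar R :=
  (\int[P]_x (KL_at f f' g g' x)%:E)%E.

Definition lower_bounded (P : probability X R) (f : X -> 'rV[R]_m) (g : Y -> 'rV[R]_m)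
  (tau : R) : Prop :=
  {ae P, forall x, forall y : Y, tau <= pmodel f g x y}.

End Defs.

From HB Require Import structures.
From mathcomp Require Import all_boot all_order all_algebra.
From mathcomp Require Import all_classical all_reals all_analysis.
From mathcomp Require Import ring lra measurable_realfun.
Import Order.TTheory GRing.Theory Num.Theory.
Local Open Scope ring_scope.

(* Write d = u - u' for the logit vectors at a point x and p = softmax u. Then
   KL(p || softmax u') = E_p[d - a] + ln E_p[exp(-(d - a))] for every constant a; taking
   a = min d puts d - a in [0, r] with r = max d - min d, and a Hoeffding-type bound gives
   KL <= r^2/4 <= (1/2) sum_y d_y^2.  Conversely KL = E_p[phi(w)] with w = ln(p/p') and
   phi(w) = exp(-w) - 1 + w >= w^2/(4 L^2) on [-L, L].  For tau-lower bounded models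
   |w| <= L := -ln tau, and L >= 1 since tau < 1/3 < 1/e.  Finally w = d - c for a constant
   c and sum_y d_y = 0 by the normalization of g and g', so sum_y w_y^2 >= sum_y d_y^2.
   Integrating these pointwise bounds over x gives the theorem. *)

Section ExpLnInequalities.
Context {R : realType}.
Implicit Types q r s w x : R.

Lemma expRN_le_chord s r : 0 <= s <= r ->
  expR (- s) <= 1 - s / r * (1 - expR (- r)).
Proof.
move=> /andP[s0 sr].
have [r0|rn0] := eqVneq r 0.
  have -> : s = 0 by apply/le_anti; rewrite s0 -r0 sr.
  by rewrite oppr0 expR0 !mul0r subr0.
have r_gt0 : 0 < r by rewrite lt0r rn0 (le_trans s0 sr).
have t0 : 0 <= s / r by rewrite divr_ge0 // ltW.
have t1 : s / r <= 1 by rewrite ler_pdivrMr // mul1r.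
have : expR (s / r * - r + (1 - s / r) * 0) <=
    s / r * expR (- r) + (1 - s / r) * expR 0 := @convex_expR R (Itv01 t0 t1) (- r) 0.
rewrite expR0 mulr0 addr0 mulr1 mulrN divfK // => conv.
by apply: (le_trans conv); lra.
Qed.

Lemma bernoulli_mgf_deriv_le q x : 0 <= q <= 1 -> 0 <= x ->
  q * (1 - q) * (1 - expR (- x)) <= x / 2 * (1 - q + q * expR (- x)).
Proof.
move=> /andP[q0 q1] x0.
have e0 : 0 < expR (- x) by apply: expR_gt0.
have e1 : expR (- x) <= 1 by rewrite expR_le1 oppr_le0.
have [x2|x2] := leP 2 x.
  have h0 : 0 <= (1 - q) * (1 - q * (1 - expR (- x))).
    by apply: mulr_ge0; nra.
  have h1 : 0 <= (x / 2 - 1) * (1 - q) by apply: mulr_ge0; lra.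
  have h2 : 0 <= x / 2 * (q * expR (- x)) by apply: mulr_ge0; nra.
  nra.
(* For x < 2 write exp(-x) = mu^4 with mu = exp(-x/4) in [1/2, 1]; both sides are then
   polynomials in mu, compared through 1 - mu <= x/4. *)
set mu := expR (- (x / 4)).
have -> : expR (- x) = mu ^+ 4 by rewrite /mu -expRM_natr; congr expR; lra.
have mu_ge : 1 - x / 4 <= mu by have := expR_ge1Dx (- (x / 4)); rewrite /mu; lra.
have mu_le1 : mu <= 1 by rewrite /mu expR_le1; lra.
have hA : 1 - mu ^+ 4 <= 2 * x * mu ^+ 2.
  have mu_ge_half : 1 / 2 <= mu by lra.
  have hB : (1 + mu) * (1 + mu ^+ 2) <= 8 * mu ^+ 2.
    have h1 : 0 <= (mu - 1/2) * (1 - mu) by apply: mulr_ge0; lra.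
    have h2 : 0 <= (mu - 1/2) * mu by apply: mulr_ge0; lra.
    nra.
  have -> : 1 - mu ^+ 4 = (1 - mu) * ((1 + mu) * (1 + mu ^+ 2)) by ring.
  nra.
have hC : 4 * mu ^+ 2 * (q * (1 - q)) <= 1 - q + q * mu ^+ 4.
  rewrite -subr_ge0.
  have -> : 1 - q + q * mu ^+ 4 - 4 * mu ^+ 2 * (q * (1 - q)) =
     ((1 - q) - q * mu ^+ 2) ^+ 2 + q * (1 - q) * (1 - mu ^+ 2) ^+ 2 by ring.
  apply: addr_ge0; first exact: sqr_ge0.
  by apply: mulr_ge0; [nra | exact: sqr_ge0].
have hq : 0 <= q * (1 - q) by nra.
have := ler_wpM2l hq hA.
nra.
Qed.

(* G(x) = q x + ln(1 - q + q e^-x) - x^2/4 vanishes at 0 and is nonincreasing: clearing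
   the positive denominator, G' <= 0 is bernoulli_mgf_deriv_le. *)
Lemma bernoulli_log_mgf_le q r : 0 <= q <= 1 -> 0 <= r ->
  q * r + ln (1 - q + q * expR (- r)) <= r ^+ 2 / 4.
Proof.
move=> q01 r0; have /andP[q0 q1] := q01.
pose h x := 1 - q + q * expR (- x).
have h_gt0 x : 0 < h x.
  rewrite /h; have := expR_gt0 (- x).
  have [->|q_neq1] := eqVneq q 1; first by rewrite subrr add0r mul1r.
  have : q < 1 by rewrite lt_neqAle q_neq1 q1.
  nra.
pose G x := q * x + ln (h x) - x ^+ 2 / 4.
have dh x : is_derive x (1 : R) h (- (q * expR (- x))).
  by rewrite /h; apply: is_derive_eq; rewrite add0r mul1r mulrN1 /GRing.scale /= mulrN.
have dG x : is_derive x (1 : R) G (q - q * expR (- x) / h x - x / 2).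
  have dlnh := is_derive1_comp (is_derive1_ln (h_gt0 x)) (dh x).
  rewrite /G; apply: is_derive_eq.
  by rewrite /GRing.scale /=; field; rewrite gt_eqF.
suff : G r <= G 0.
  by rewrite /G /h oppr0 expR0 mulr1 subrK ln1 expr0n /= mul0r !mulr0 !subr0 addr0 subr_le0.
apply: (@ler0_derive1_nincry R G 0) => //.
- move=> x; rewrite in_itv /= andbT => x0.
  rewrite derive1E derive_val.
  have := bernoulli_mgf_deriv_le q x q01 (ltW x0).
  have hx := h_gt0 x; rewrite /h in hx * => deriv_le.
  rewrite -(@ler_pM2r _ (1 - q + q * expR (- x))) // mul0r !mulrBl divfK ?gt_eqF //.
  nra.
- by apply: derivable_within_continuous => x _; have [] := dG x.
Qed.

(* Hoeffding's lemma for [-s] with constant 1/4 instead of the optimal 1/8: by convexity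
   E exp(-s) is at most the value for the two-point law on {0, r} with the same mean. *)
Lemma hoeffding_log_mgf_le (I : finType) (p s : I -> R) r :
  (forall i, 0 <= p i) -> \sum_i p i = 1 -> (forall i, 0 <= s i <= r) ->
  \sum_i p i * s i + ln (\sum_i p i * expR (- s i)) <= r ^+ 2 / 4.
Proof.
move=> p0 p1 s0r.
set mean := \sum_i p i * s i; set mgf := \sum_i p i * expR (- s i).
have avg_le (a b : I -> R) : (forall i, a i <= b i) ->
    \sum_i p i * a i <= \sum_i p i * b i.
  by move=> ab; apply: ler_sum => i _; apply: ler_wpM2l.
have avg_cst c : \sum_i p i * c = c by rewrite -mulr_suml p1 mul1r.
have mean_ge0 : 0 <= mean.
  by apply: sumr_ge0 => i _; apply: mulr_ge0 => //; case/andP: (s0r i).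
have mean_le : mean <= r.
  by rewrite -[leRHS]avg_cst; apply: avg_le => i; case/andP: (s0r i).
have mgf_gt0 : 0 < mgf.
  apply: (lt_le_trans (expR_gt0 (- r))); rewrite -[leLHS]avg_cst; apply: avg_le => i.
  by rewrite ler_expR lerN2; case/andP: (s0r i).
have mgf_le : mgf <= 1 - mean / r * (1 - expR (- r)).
  apply: (le_trans (avg_le _ _ (fun i => expRN_le_chord (s i) r (s0r i)))).
  under eq_bigr => i _ do rewrite mulrBr mulr1 !mulrA.
  by rewrite sumrB p1 -!mulr_suml.
have [r0|r_neq0] := eqVneq r 0.
  have -> : mean = 0 by apply/le_anti; rewrite mean_ge0 -r0 mean_le.
  rewrite r0 expr0n /= mul0r add0r ln_le0 //.
  by move: mgf_le; rewrite r0 invr0 mulr0 mul0r subr0.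
have r_gt0 : 0 < r by rewrite lt0r r_neq0 (le_trans mean_ge0).
set q := mean / r.
have q01 : 0 <= q <= 1 by rewrite /q divr_ge0 ?(ltW r_gt0) // ler_pdivrMr // mul1r.
have -> : mean = q * r by rewrite /q divfK.
have : ln mgf <= ln (1 - q + q * expR (- r)).
  have -> : 1 - q + q * expR (- r) = 1 - q * (1 - expR (- r)) by ring.
  by rewrite ler_ln ?posrE ?(lt_le_trans mgf_gt0).
have := bernoulli_log_mgf_le q r q01 (ltW r_gt0).
lra.
Qed.

Lemma expR1_le3 : expR (1 : R) <= 3.
Proof.
have h1 : 7 / 8 <= expR (- (1 / 8) : R) by have := expR_ge1Dx (- (1 / 8) : R); lra.
have h2 : expR (1 / 8 : R) <= 8 / 7.
  have e_gt0 : 0 < expR (- (1 / 8) : R) by apply: expR_gt0.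
  by rewrite -[leLHS]invrK -expRN -(@invf_div _ 7 8) lef_pV2 ?posrE //; lra.
have -> : expR (1 : R) = expR (1 / 8) ^+ 8 by rewrite -expRM_natl mul1r divff.
apply: (le_trans (y := (8 / 7) ^+ 8)).
  by apply: lerXn2r; rewrite ?nnegrE ?expR_ge0 //; lra.
by rewrite expr_div_n ler_pdivrMr ?exprn_gt0 // !exprS expr0; lra.
Qed.

Lemma expRN_sub1D_ge0 w : 0 <= expR (- w) - 1 + w.
Proof. by have := expR_ge1Dx (- w); lra. Qed.

Lemma sqr_div_le_expRN_sub1D L w : 1 <= L -> - L <= w <= L ->
  w ^+ 2 / (4 * L ^+ 2) <= expR (- w) - 1 + w.
Proof.
move=> L_ge1 /andP[wl wu].
rewrite ler_pdivrMr; last by nra.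
have [w2|w2] := leP w 2; last by have := expR_gt0 (- w); nra.
have e_ge : (1 - w / 2) ^+ 2 <= expR (- w).
  have -> : expR (- w) = expR (- (w / 2)) ^+ 2 by rewrite -expRM_natr; congr expR; lra.
  by apply: lerXn2r; rewrite ?nnegrE ?expR_ge0; have := expR_ge1Dx (- (w / 2)); lra.
have : w ^+ 2 / 4 <= expR (- w) - 1 + w by nra.
have : 0 <= (L ^+ 2 - 1) * (expR (- w) - 1 + w).
  by apply: mulr_ge0; [nra | exact: expRN_sub1D_ge0].
lra.
Qed.

End ExpLnInequalities.

Section SumSquares.
Context {R : realType} {I : finType}.
Implicit Types d : I -> R.

Lemma sumr_sqr_le_shift d c : \sum_i d i = 0 ->
  \sum_i d i ^+ 2 <= \sum_i (d i - c) ^+ 2.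
Proof.
move=> d0.
have -> : \sum_i (d i - c) ^+ 2 = \sum_i d i ^+ 2 + (\sum_(i : I) c ^+ 2 - 2 * c * \sum_i d i).
  by rewrite mulr_sumr -sumrB -big_split /=; apply: eq_bigr => i _; ring.
by rewrite d0 mulr0 subr0 lerDl; apply: sumr_ge0 => i _; exact: sqr_ge0.
Qed.

Lemma sqr_sub_le_sumr_sqr d i j : (d j - d i) ^+ 2 <= 2 * \sum_k d k ^+ 2.
Proof.
have sq_ge0 (P : pred I) : 0 <= \sum_(k | P k) d k ^+ 2.
  by apply: sumr_ge0 => k _; exact: sqr_ge0.
have [<-|ij] := eqVneq i j; first by rewrite subrr expr0n mulr_ge0.
have : d i ^+ 2 + d j ^+ 2 <= \sum_k d k ^+ 2.
  rewrite (bigD1 i) //= (bigD1 j) 1?eq_sym //= addrA lerDl; exact: sq_ge0.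
have := sqr_ge0 (d i + d j).
nra.
Qed.

End SumSquares.

Section Softmax.
Context {R : realType} {Y : finType}.
Implicit Types u v : Y -> R.

Definition sumexp u : R := \sum_y expR (u y).

Definition softmax u y : R := expR (u y) / sumexp u.

Definition kl_softmax u v : R :=
  \sum_y softmax u y * ln (softmax u y / softmax v y).

Lemma sumexp_gt0 (y : Y) u : 0 < sumexp u.
Proof.
apply: (lt_le_trans (expR_gt0 (u y))).
by rewrite /sumexp (bigD1 y) //= lerDl; apply: sumr_ge0 => z _; exact: expR_ge0.
Qed.

Lemma softmax_gt0 u y : 0 < softmax u y.
Proof. by rewrite divr_gt0 ?expR_gt0 ?(sumexp_gt0 y). Qed.

Lemma softmaxE u y : softmax u y = expR (u y - ln (sumexp u)).
Proof. by rewrite expRD expRN lnK // posrE (sumexp_gt0 y). Qed.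

Lemma sum_softmax (y0 : Y) u : \sum_y softmax u y = 1.
Proof. by rewrite -mulr_suml divff // gt_eqF // (sumexp_gt0 y0). Qed.

Lemma softmax_le1 u y : softmax u y <= 1.
Proof.
rewrite -(sum_softmax y u) (bigD1 y) //= lerDl.
by apply: sumr_ge0 => z _; exact/ltW/softmax_gt0.
Qed.

Lemma ln_softmax_div u v y : ln (softmax u y / softmax v y) =
  u y - v y - (ln (sumexp u) - ln (sumexp v)).
Proof. by rewrite ln_div ?posrE ?softmax_gt0 // !softmaxE !expRK; ring. Qed.

Lemma kl_softmaxE u v : kl_softmax u v =
  \sum_y expR (u y - ln (sumexp u)) * (u y - v y - (ln (sumexp u) - ln (sumexp v))).
Proof. by apply: eq_bigr => y _; rewrite ln_softmax_div softmaxE. Qed.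

Lemma kl_softmax_shift (y0 : Y) u v a : kl_softmax u v =
  \sum_y softmax u y * (u y - v y - a) +
  ln (\sum_y softmax u y * expR (- (u y - v y - a))).
Proof.
set c := ln (sumexp u) - ln (sumexp v).
have mgfE : \sum_y softmax u y * expR (- (u y - v y - a)) = expR (a - c).
  rewrite -[RHS]mul1r -(sum_softmax y0 v) mulr_suml; apply: eq_bigr => y _.
  by rewrite !softmaxE -!expRD; congr expR; rewrite /c; ring.
have avgE b : \sum_y softmax u y * (u y - v y - b) =
    \sum_y softmax u y * (u y - v y) - b.
  under eq_bigr => y _ do rewrite mulrBr.
  by rewrite sumrB -mulr_suml (sum_softmax y0) mul1r.
rewrite mgfE expRK /kl_softmax.
under eq_bigr => y _ do rewrite ln_softmax_div -/c.
rewrite !avgE; ring.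
Qed.

Lemma kl_softmax_sum_expRN (y0 : Y) u v : kl_softmax u v =
  \sum_y softmax u y * (expR (- ln (softmax u y / softmax v y)) - 1 +
                         ln (softmax u y / softmax v y)).
Proof.
have termE y : softmax u y * (expR (- ln (softmax u y / softmax v y)) - 1 +
      ln (softmax u y / softmax v y)) =
    softmax v y - softmax u y + softmax u y * ln (softmax u y / softmax v y).
  rewrite mulrDr mulrBr mulr1; congr (_ - _ + _).
  by rewrite ln_softmax_div !softmaxE -expRD; congr expR; ring.
rewrite (eq_bigr _ (fun y _ => termE y)) big_split big_split /= sumrN.
by rewrite !(sum_softmax y0) subrr add0r.
Qed.

Lemma kl_softmax_ge0 u v : 0 <= kl_softmax u v.
Proof.
have [y0 _|Y0] := pickP (@predT Y); last by rewrite /kl_softmax big_pred0.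
rewrite (kl_softmax_sum_expRN y0); apply: sumr_ge0 => y _.
by apply: mulr_ge0; [exact/ltW/softmax_gt0 | exact: expRN_sub1D_ge0].
Qed.

Lemma kl_softmax_le u v : 2 * kl_softmax u v <= \sum_y (u y - v y) ^+ 2.
Proof.
have [y0 _|Y0] := pickP (@predT Y); last by rewrite /kl_softmax !big_pred0 // mulr0.
pose d y := u y - v y.
have [y1 _ d_min] := @arg_minP _ R Y y0 predT d isT.
have [y2 _ d_max] := @arg_maxP _ R Y y0 predT d isT.
have s_range y : 0 <= d y - d y1 <= d y2 - d y1.
  by rewrite subr_ge0 lerD2r d_min //; exact: d_max.
have := hoeffding_log_mgf_le _ _ _ _ (fun y => ltW (softmax_gt0 u y)) (sum_softmax y0 u) s_range.
rewrite -(kl_softmax_shift y0).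
have := sqr_sub_le_sumr_sqr d y1 y2.
lra.
Qed.

Lemma kl_softmax_ge u v (tau : R) : 0 < tau -> tau < 1 / 3 ->
  (forall y, tau <= softmax u y) -> (forall y, tau <= softmax v y) ->
  \sum_y (u y - v y) = 0 ->
  \sum_y (u y - v y) ^+ 2 <= 4 * ln tau ^+ 2 / tau * kl_softmax u v.
Proof.
move=> tau_gt0 tau_lt hu hv sum_d0.
have [y0 _|Y0] := pickP (@predT Y); last by rewrite /kl_softmax !big_pred0 // mulr0.
set L := - ln tau.
have L_ge1 : 1 <= L.
  have tau_le : tau <= expR (-1).
    rewrite expRN; apply: (le_trans (ltW tau_lt)).
    by rewrite div1r lef_pV2 ?posrE ?expR_gt0 // expR1_le3.
  have : ln tau <= -1 by rewrite -[-1]expRK ler_ln ?posrE ?expR_gt0.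
  rewrite /L; lra.
pose w y := ln (softmax u y / softmax v y).
have ln_range p : tau <= p -> p <= 1 -> ln tau <= ln p <= 0.
  move=> tau_le p_le1; rewrite ln_le0 // andbT ler_ln ?posrE //.
  exact: lt_le_trans tau_le.
have w_range y : - L <= w y <= L.
  have /andP[? ?] := ln_range _ (hu y) (softmax_le1 u y).
  have /andP[? ?] := ln_range _ (hv y) (softmax_le1 v y).
  by rewrite /w ln_div ?posrE ?softmax_gt0 // /L; apply/andP; split; lra.
have sq_le : \sum_y (u y - v y) ^+ 2 <= \sum_y w y ^+ 2.
  under [X in _ <= X]eq_bigr => y _ do rewrite /w ln_softmax_div.
  exact: sumr_sqr_le_shift.
have kl_ge : tau / (4 * L ^+ 2) * \sum_y w y ^+ 2 <= kl_softmax u v.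
  rewrite (kl_softmax_sum_expRN y0) mulr_sumr; apply: ler_sum => y _.
  have := sqr_div_le_expRN_sub1D L (w y) L_ge1 (w_range y).
  rewrite -/(w y) => hp.
  have h0 : 0 <= w y ^+ 2 / (4 * L ^+ 2) by apply: divr_ge0; [exact: sqr_ge0 | nra].
  by have := ler_pM (ltW tau_gt0) h0 (hu y) hp; rewrite mulrA mulrAC.
have L2_gt0 : 0 < 4 * L ^+ 2 by nra.
have -> : 4 * ln tau ^+ 2 / tau = (tau / (4 * L ^+ 2))^-1 by rewrite invf_div /L sqrrN.
by rewrite (le_trans sq_le) // ler_pdivlMl ?divr_gt0.
Qed.

End Softmax.

Lemma ge0_le_integral_scale d (X : measurableType d) (R : realType)
    (mu : {measure set X -> \bar R}) (h k : X -> R) (a b : R) :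
  0 <= a -> 0 <= b -> measurable_fun setT h -> measurable_fun setT k ->
  (forall x, 0 <= h x) -> (forall x, 0 <= k x) ->
  {ae mu, forall x, a * h x <= b * k x} ->
  (a%:E * \int[mu]_x (h x)%:E <= b%:E * \int[mu]_x (k x)%:E)%E.
Proof.
move=> a0 b0 mh mk h0 k0 hk.
have mhE := (measurable_EFinP setT h).2 mh.
have mkE := (measurable_EFinP setT k).2 mk.
rewrite -(ge0_integralZl _ _ mhE) ?lee_fin //; last by move=> x _; rewrite lee_fin.
rewrite -(ge0_integralZl _ _ mkE) ?lee_fin //; last by move=> x _; rewrite lee_fin.
apply: ae_ge0_le_integral => //.
- by move=> x _; rewrite -EFinM lee_fin mulr_ge0.
- exact: measurable_funeM.
- by move=> x _; rewrite -EFinM lee_fin mulr_ge0.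
- exact: measurable_funeM.
- by apply: filterS hk => x hx _; rewrite -EFinM lee_fin.
Qed.

Section Models.
Context {R : realType} {d : measure_display} {X : measurableType d} {Y : finType} {m : nat}.
Implicit Types (f : X -> 'rV[R]_m) (g : Y -> 'rV[R]_m).

Lemma measurable_logit f g : (forall i : 'I_m, measurable_fun setT (fun x => f x 0 i)) ->
  forall y, measurable_fun setT (fun x => logit f g x y).
Proof.
move=> hf y; apply: measurable_sum => i.
by apply: measurable_funM => //; exact: measurable_cst.
Qed.

Lemma sum_logit f g : unembedding_normalized g -> forall x, \sum_y logit f g x y = 0.
Proof.
move=> hg x; rewrite /logit exchange_big /=; apply: big1 => i _.
by rewrite -mulr_sumr -summxE hg mxE mulr0.
Qed.

Lemma measurable_ln_sumexp_logit f g :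
  (forall i : 'I_m, measurable_fun setT (fun x => f x 0 i)) ->
  measurable_fun setT (fun x => ln (sumexp (logit f g x))).
Proof.
move=> hf; apply: measurableT_comp; first exact: measurable_ln.
apply: measurable_sum => y; apply: measurableT_comp; first exact: measurable_expR.
exact: measurable_logit.
Qed.

Variables (f f' : X -> 'rV[R]_m) (g g' : Y -> 'rV[R]_m).
Hypotheses (hf : forall i : 'I_m, measurable_fun setT (fun x => f x 0 i))
           (hf' : forall i : 'I_m, measurable_fun setT (fun x => f' x 0 i)).

Lemma measurable_sqr_logit_dist :
  measurable_fun setT (fun x => \sum_y (logit f g x y - logit f' g' x y) ^+ 2).
Proof.
apply: measurable_sum => y; apply: measurable_funX.
by apply: measurable_funB; exact: measurable_logit.
Qed.

Lemma measurable_KL_at : measurable_fun setT (KL_at f f' g g').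
Proof.
change (KL_at f f' g g') with (fun x => kl_softmax (logit f g x) (logit f' g' x)).
under eq_fun => x do rewrite kl_softmaxE.
apply: measurable_sum => y; apply: measurable_funM.
  apply: measurableT_comp; first exact: measurable_expR.
  by apply: measurable_funB; [exact: measurable_logit | exact: measurable_ln_sumexp_logit].
apply: measurable_funB; first by apply: measurable_funB; exact: measurable_logit.
by apply: measurable_funB; exact: measurable_ln_sumexp_logit.
Qed.

End Models.

Theorem mainTheorem1 (R : realType) (d : measure_display) (X : measurableType d)
  (P : probability X R) (Y : finType) (m : nat)
  (f f' : X -> 'rV[R]_m) (g g' : Y -> 'rV[R]_m)
  (hf : forall i : 'I_m, measurable_fun setT (fun x => f x 0 i))
  (hf' : forall i : 'I_m, measurable_fun setT (fun x => f' x 0 i))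
  (hg : unembedding_normalized g) (hg' : unembedding_normalized g') :
  ((2%:E * d_KL P f f' g g' <= d_logit2 P f f' g g')%E) /\
  (forall tau : R, 0 < tau -> tau < 1 / 3 ->
     lower_bounded P f g tau -> lower_bounded P f' g' tau ->
     (d_logit2 P f f' g g' <= (4 * ln tau ^+ 2 / tau)%:E * d_KL P f f' g g')%E).
Proof.
have mN := measurable_sqr_logit_dist _ _ g g' hf hf'.
have mK := measurable_KL_at _ _ g g' hf hf'.
have N_ge0 x : 0 <= \sum_y (logit f g x y - logit f' g' x y) ^+ 2.
  by apply: sumr_ge0 => y _; exact: sqr_ge0.
have K_ge0 x : 0 <= KL_at f f' g g' x := kl_softmax_ge0 _ _.
split.
  rewrite -[d_logit2 _ _ _ _ _]mul1e; apply: ge0_le_integral_scale => //.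
  by apply: aeW => x; rewrite mul1r; exact: kl_softmax_le.
move=> tau tau_gt0 tau_lt hu hv.
rewrite -[d_logit2 _ _ _ _ _]mul1e; apply: ge0_le_integral_scale => //.
- by apply: divr_ge0; [nra | exact: ltW].
- apply: filterS2 hu hv => x hu hv; rewrite mul1r.
  by apply: kl_softmax_ge => //; rewrite sumrB !sum_logit // subrr.
Qed.
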